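(* Let $p$ be a prime, let $M_2(\mathbb{F}_p)$ be the ring of $2\times 2$ matrices over $\mathbb{F}_p$, $GL(2,p)$ its group of invertible matrices, and $\chi(A)=\exp\bigl(2\pi i\,\mathrm{Tr}(A)/p\bigr)$ for $A\in M_2(\mathbb{F}_p)$. Let $I_L$ be a minimal left ideal of $M_2(\mathbb{F}_p)$. Then for every nonzero $B\in I_L$, \[\sum_{u\in GL(2,p)}\chi(uB)=p-p^2.\]
   Context: $\mathrm{Tr}(A)\in\mathbb{F}_p$ denotes the trace of $A$, identified with an integer in $\{0,\dots,p-1\}$ in the exponent. *)

From HB Require Import structures.
From mathcomp Require Import all_boot all_order all_algebra.
From mathcomp Require Import complex.
From mathcomp Require Import reals trigo.
Set Implicit Arguments. Unset Strict Implicit. Unset Printing Implicit Defensive.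
Import Order.TTheory GRing.Theory Num.Theory.
Local Open Scope ring_scope.
Local Open Scope complex_scope.

Definition chi (R : realType) (p : nat) (A : 'M['F_p]_2) : R[i] :=
  let t : R := (2 * pi * (nat_of_ord (\tr A))%:R) / p%:R in
  (cos t +i* sin t)%C.

Definition left_ideal (p : nat) (I : {set 'M['F_p]_2}) : Prop :=
  [/\ 0 \in I,
      (forall x y, x \in I -> y \in I -> x + y \in I) &
      (forall r x, x \in I -> r *m x \in I)].

Definition minimal_left_ideal (p : nat) (I : {set 'M['F_p]_2}) : Prop :=
  [/\ left_ideal I, I != [set 0] &
      forall J : {set 'M['F_p]_2}, left_ideal J -> J \subset I ->
        J = [set 0] \/ J = I].

From HB Require Import structures.
From mathcomp Require Import all_boot all_order all_algebra.
From mathcomp Require Import complex.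
From mathcomp Require Import reals trigo.
From mathcomp Require Import ring lra.
Set Implicit Arguments.
Unset Strict Implicit.
Unset Printing Implicit Defensive.

Import Order.TTheory GRing.Theory Num.Theory.
Local Open Scope ring_scope.

(* A unit in a left ideal generates the whole ring, which is not
   a minimal left ideal, so the nonzero B is singular, hence of rank one:
   B = L E U with L, U invertible and E the matrix unit at (1,1).  As
   Tr(u B) = Tr((U u L) E) = (U u L)_11 and u |-> U u L permutes GL(2,p), the
   sum equals the sum of psi(u_11) over GL(2,p), psi(a) = exp(2 pi i a/p).
   The entry u_11 of an invertible u vanishes for p(p-1)^2 matrices and takes
   each nonzero value for p^2(p-1) of them; since the nontrivial character
   psi sums to 0 over F_p, the nonzero values contribute -p^2(p-1), and
   p(p-1)^2 - p^2(p-1) = p - p^2. *)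

Section ComplexExponential.
Variable R : realType.

Definition expi (t : R) : R[i] := (cos t +i* sin t)%C.

Lemma expiD s t : expi (s + t) = expi s * expi t.
Proof.
rewrite /expi cosD sinD; apply/eqP; rewrite eq_complex /=.
by apply/andP; split; apply/eqP; ring.
Qed.

Lemma expi0 : expi 0 = 1.
Proof. by rewrite /expi cos0 sin0. Qed.

Lemma expiMn t n : expi (t *+ n) = expi t ^+ n.
Proof.
elim: n => [|n IHn]; first by rewrite mulr0n expi0 expr0.
by rewrite mulrS expiD IHn exprS.
Qed.

Lemma expi_2pi : expi (pi *+ 2) = 1.
Proof. by rewrite /expi cos2pi sin2pi. Qed.

Lemma expi_neq1 t : 0 < t < pi *+ 2 -> expi t != 1.
Proof.
move=> /andP[t_gt0 t_lt2pi]; apply/negP => /eqP /(congr1 (@complex.Re _)) /=.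
have sin_half_gt0 : 0 < sin (t / 2).
  by apply: sin_gt0_pi; rewrite divr_gt0 //= ltr_pdivrMr // mulr_natr.
have -> : t = (t / 2) *+ 2 by rewrite -mulr_natr divfK ?pnatr_eq0.
rewrite cos_mulr2n => cos_eq1.
have := cos2Dsin2 (t / 2); rewrite !expr2 mulr2n in cos_eq1 *; nra.
Qed.
End ComplexExponential.

Lemma sum_char_eq0 (G : finZmodType) (V : idomainType) (f : G -> V) (g : G) :
  {morph f : a b / a + b >-> a * b} -> f g != 1 -> \sum_a f a = 0.
Proof.
move=> fD fg_neq1.
have sum_shift : \sum_a f a = f g * \sum_a f a.
  by rewrite mulr_sumr (reindex_inj (addrI g)); apply: eq_bigr => a _; rewrite fD.
have : (f g - 1) * \sum_a f a = 0 by rewrite mulrBl mul1r -sum_shift subrr.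
by move/eqP; rewrite mulf_eq0 subr_eq0 (negbTE fg_neq1) => /eqP.
Qed.

Section AdditiveCharacter.
Variables (R : realType) (p : nat).
Local Notation omega := (expi (pi *+ 2 / p%:R) : R[i]).

Definition addchar (a : 'F_p) : R[i] := omega ^+ a.

Lemma chiE (A : 'M['F_p]_2) : chi R A = addchar (\tr A).
Proof.
rewrite /chi /addchar -expiMn -/(expi _); congr expi.
by rewrite mulr_natl mulrAC mulr_natr.
Qed.

Hypothesis p_pr : prime p.

Lemma omega_expr_p : omega ^+ p = 1.
Proof.
rewrite -expiMn -[_ *+ p]mulr_natr divfK ?expi_2pi //.
by rewrite pnatr_eq0 -lt0n prime_gt0.
Qed.

Lemma addcharD : {morph addchar : a b / a + b >-> a * b}.
Proof.
move=> a b; rewrite /addchar -exprD -(expr_mod (a + b)%N omega_expr_p); congr (_ ^+ _).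
by rewrite -[RHS]val_Fp_nat // natrD !natr_Zp.
Qed.

Lemma addchar0 : addchar 0 = 1.
Proof. exact: expr0. Qed.

Lemma addchar1 : addchar 1 != 1.
Proof.
have p_gt1 := prime_gt1 p_pr.
have p_gt0 : (0 : R) < p%:R by rewrite ltr0n ltnW.
have pi2_gt0 : (0 : R) < pi *+ 2 by rewrite pmulrn_lgt0 ?pi_gt0.
rewrite /addchar -[X in _ ^+ X]/(nat_of_ord (1%:R : 'F_p)) val_Fp_nat // modn_small //.
by rewrite expr1 expi_neq1 // divr_gt0 //= ltr_pdivrMr // ltr_pMr // ltr1n.
Qed.

Lemma sum_addchar_nonzero : \sum_(a | a != 0) addchar a = -1.
Proof.
have := sum_char_eq0 addcharD addchar1.
by rewrite (bigD1 0) //= addchar0 addrC => /eqP; rewrite addr_eq0 => /eqP.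
Qed.
End AdditiveCharacter.

Section EntryCountGL2.
Variable F : finFieldType.
Local Notation q := #|F|.

Definition mx2 (a b c d : F) : 'M[F]_2 :=
  \matrix_(i, j) if i == 0 then (if j == 0 then a else b)
                 else (if j == 0 then c else d).

Lemma det_mx2 a b c d : \det (mx2 a b c d) = a * d - b * c.
Proof.
rewrite (expand_det_row _ 0) big_ord_recl big_ord1 /cofactor !det_mx11 !mxE /=.
by rewrite /bump /= expr0 mul1r expr1 mulN1r mulrN.
Qed.

Lemma sum_mx2 (V : nmodType) (f : 'M[F]_2 -> V) :
  \sum_u f u = \sum_a \sum_b \sum_c \sum_d f (mx2 a b c d).
Proof.
pose entries (u : 'M[F]_2) := ((u 0 0, u 0 1), (u 1 0, u 1 1)).
pose of_entries (x : (F * F) * (F * F)) := mx2 x.1.1 x.1.2 x.2.1 x.2.2.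
have entriesK : cancel entries of_entries.
  move=> u; apply/matrixP => i j; rewrite !mxE /=.
  by case: i => [[|[|i]] ?]; case: j => [[|[|j]] ?] //=;
    congr (u _ _); apply: val_inj.
have of_entriesK : cancel of_entries entries.
  by move=> [[a b] [c d]]; rewrite /entries !mxE.
rewrite (reindex of_entries); last by exists entries.
symmetry; rewrite pair_bigA; under eq_bigr do rewrite pair_bigA.
exact: pair_bigA.
Qed.

Lemma sum_nat_neq (c : F) : (\sum_(x : F) (x != c))%N = q.-1.
Proof.
rewrite -(cardC1 c) -sum1_card [RHS]big_mkcond.
by apply: eq_bigr => x _; rewrite inE; case: eqP.
Qed.

Lemma count_det_neq0 (a : F) :
  (\sum_(b : F) \sum_(c : F) \sum_(d : F) (a * d - b * c != 0)%R)%N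
    = if a == 0 then (q * q.-1 ^ 2)%N else (q ^ 2 * q.-1)%N.
Proof.
case: eqP => [-> | /eqP a_neq0].
  transitivity (\sum_(b : F) (b != 0%R) * (\sum_(c : F) (c != 0%R) * q))%N.
    apply: eq_bigr => b _; rewrite big_distrr; apply: eq_bigr => c _ /=.
    under eq_bigr do rewrite mul0r sub0r oppr_eq0 mulf_eq0 negb_or.
    by rewrite sum_nat_const mulnA mulnb mulnC.
  by rewrite -!big_distrl /= !sum_nat_neq mulnA mulnn mulnC.
transitivity (\sum_(b : F) \sum_(c : F) \sum_(d : F) (d != b * c / a))%N.
  do 3!(apply: eq_bigr => ? _); rewrite subr_eq0 (can2_eq (mulKf a_neq0) (mulVKf a_neq0)).
  by rewrite mulrC.
by under eq_bigr do under eq_bigr do rewrite sum_nat_neq; rewrite !sum_nat_const mulnA.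
Qed.

Lemma sum_unitmx_entry00 (V : nmodType) (f : F -> V) :
  \sum_(u : 'M[F]_2 | u \in unitmx) f (u 0 0)
    = f 0 *+ (q * q.-1 ^ 2) + (\sum_(a | a != 0) f a) *+ (q ^ 2 * q.-1).
Proof.
transitivity
  (\sum_a f a *+ \sum_(b : F) \sum_(c : F) \sum_(d : F) (a * d - b * c != 0)%R).
  rewrite big_mkcond sum_mx2; apply: eq_bigr => a _.
  do 3!(rewrite -sumrMnr; apply: eq_bigr => ? _).
  by rewrite unitmxE unitfE det_mx2 mxE mulrb.
rewrite (bigD1 0) //= count_det_neq0 eqxx -sumrMnl; congr (_ + _).
by apply: eq_bigr => a a_neq0; rewrite count_det_neq0 (negbTE a_neq0).
Qed.
End EntryCountGL2.

Lemma sum_unitmx_mulmxLR (F : finFieldType) (n : nat) (V : nmodType)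
    (f : 'M[F]_n -> V) (U L : 'M[F]_n) :
  U \in unitmx -> L \in unitmx ->
  \sum_(u | u \in unitmx) f (U *m u *m L) = \sum_(u | u \in unitmx) f u.
Proof.
move=> U_unit L_unit.
have UuLK u : U *m (invmx U *m u *m invmx L) *m L = u.
  by rewrite !mulmxA mulmxV // mul1mx -mulmxA mulVmx // mulmx1.
have invUuLK u : invmx U *m (U *m u *m L) *m invmx L = u.
  by rewrite !mulmxA mulVmx // mul1mx -mulmxA mulmxV // mulmx1.
rewrite (reindex (fun u => invmx U *m u *m invmx L)); last first.
  by exists (fun u => U *m u *m L) => u _.
apply: eq_big => [u | u _]; last by rewrite UuLK.
by rewrite !unitmx_mul !unitmx_inv U_unit L_unit andbT.
Qed.

Lemma mxtrace_mul_pid1 (R : comNzRingType) (n : nat) (A : 'M[R]_n.+1) :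
  \tr (A *m pid_mx 1) = A 0 0.
Proof.
have pidE (i j : 'I_n.+1) : pid_mx 1 i j = ((i == 0) && (j == 0))%:R :> R.
  rewrite mxE -!val_eqE.
  by case: i j => [[|i] ?] [[|j] ?] //=; rewrite ltnS ltn0 andbF.
rewrite /mxtrace (bigD1 0) //= big1 => [|i i_neq0]; rewrite mxE.
  rewrite (bigD1 0) //= big1 => [|j j_neq0]; rewrite pidE.
    by rewrite eqxx mulr1 !addr0.
  by rewrite (negbTE j_neq0) mulr0.
by rewrite big1 // => j _; rewrite pidE (negbTE i_neq0) andbF mulr0.
Qed.

(* A unit would put every matrix in I, but the matrices with zero second
   column form a left ideal that is neither 0 nor the whole ring. *)
Lemma minimal_left_ideal_not_unit (p : nat) (I : {set 'M['F_p]_2}) (B : 'M['F_p]_2) :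
  minimal_left_ideal I -> B \in I -> B \notin unitmx.
Proof.
case=> -[_ _ I_mull] _ I_min B_I; apply/negP => B_unit.
have I_full X : X \in I.
  by rewrite -[X](mulmxKV B_unit); apply: I_mull.
pose J := [set X : 'M['F_p]_2 | X *m (delta_mx 1 1 : 'M_2) == 0].
have J_ideal : left_ideal J.
  split=> [|x y|r x]; rewrite !inE ?mul0mx // ?mulmxDl -?mulmxA.
    by move=> /eqP-> /eqP->; rewrite addr0.
  by move=> /eqP->; rewrite mulmx0.
have J_sub : J \subset I by apply/subsetP => X _; apply: I_full.
have [J0 | JI] := I_min J J_ideal J_sub.
  have : delta_mx 0 0 \in J by rewrite inE mul_delta_mx_0.
  rewrite J0 inE => /eqP /matrixP /(_ 0 0).
  by rewrite !mxE /= => /eqP; rewrite oner_eq0.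
have : 1%:M \in J by rewrite JI.
rewrite inE mul1mx => /eqP /matrixP /(_ 1 1).
by rewrite !mxE /= => /eqP; rewrite oner_eq0.
Qed.

Lemma rank_minimal_left_ideal (p : nat) (I : {set 'M['F_p]_2}) (B : 'M['F_p]_2) :
  minimal_left_ideal I -> B \in I -> B != 0 -> \rank B = 1%N.
Proof.
move=> I_min B_I B_neq0.
have := minimal_left_ideal_not_unit I_min B_I.
rewrite -row_free_unit /row_free -mxrank_eq0 in B_neq0 *.
by have := rank_leq_row B; case: (\rank B) B_neq0 => [|[|[]]].
Qed.

Theorem theorem2p4 (R : realType) (p : nat) (hp : prime p)
    (IL : {set 'M['F_p]_2}) (hIL : minimal_left_ideal IL)
    (B : 'M['F_p]_2) (hB : B \in IL) (hB0 : B != 0) :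
  \sum_(u : 'M['F_p]_2 | u \in unitmx) chi R (u *m B)
    = (p%:R - (p ^ 2)%:R : R[i]).
Proof.
pose L := col_ebase B; pose U := row_ebase B.
have B_rank1 : L *m pid_mx 1 *m U = B.
  by have := mulmx_ebase B; rewrite (rank_minimal_left_ideal hIL hB hB0).
transitivity (\sum_(u : 'M['F_p]_2 | u \in unitmx) addchar R ((U *m u *m L) 0 0)).
  apply: eq_bigr => u _.
  by rewrite chiE -B_rank1 !mulmxA mxtrace_mulC !mulmxA mxtrace_mul_pid1.
rewrite (sum_unitmx_mulmxLR (fun v => addchar R (v 0 0))
  (row_ebase_unit B) (col_ebase_unit B)).
rewrite sum_unitmx_entry00 addchar0 sum_addchar_nonzero // card_Fp //.
have [k ->] : exists k, p = k.+1 by exists p.-1; rewrite prednK ?prime_gt0.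
by rewrite mulNrn; ring.
Qed.
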